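(* Consider $n$ robots with positions $p_1,\dots,p_n\in\mathbb R^m$ (stacked state $\mathbf x$), communication range $R>0$, leader set $\mathcal L=\{1,\dots,l\}$ and follower set $\mathcal F=\{l+1,\dots,n\}$ with $f=n-l\ge1$. Let $r\in\mathbb Z_+$, $\delta\in\mathbb Z_+$ with $\delta\le f$, and parameters $s,s_A>0$, $q,q_A\in(0,1)$. Let $\bar\pi^r_{\mathcal F}(\delta)$ be computed by the smoothed percolation recursion below. If $\bar\pi^r_{\mathcal F}(\delta)\ge\mathbf 0_f$ componentwise, then the communication graph $\mathcal G(\mathbf x)$ is strongly $r$-robust with respect to $\mathcal L$.
   Context: $\Delta_{ij}(\mathbf x)=\|p_i-p_j\|$. The communication graph $\mathcal G(\mathbf x)=(\mathcal V,\mathcal E)$ has $\mathcal V=[n]$ and undirected edges $\{i,j\}$, $i\ne j$, with $\Delta_{ij}(\mathbf x)<R$; $\mathcal N_i$ is the neighbor set of $i$. A nonempty $\mathcal S\subseteq\mathcal V$ is $r$-reachable if some $i\in\mathcal S$ has $|\mathcal N_i\setminus\mathcal S|\ge r$; $\mathcal G$ is strongly $r$-robust with respect to $\mathcal L$ if every nonempty $\mathcal S_2\subseteq\mathcal V\setminus\mathcal L$ is $r$-reachable. Sigmoid: $\sigma_{s,q}(y)=\frac{1+q}{1+q^{-1}e^{-sy}}-q$, and $\sigma^f_{s,q}$ is its elementwise application on $\mathbb R^f$. Smoothed adjacency $\bar A(\mathbf x)\in\mathbb R^{n\times n}$: for $i\ne j$, $\bar a_{ij}(\mathbf x)=\sigma_{s_A,q_A}\big((R^2-\Delta_{ij}(\mathbf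 x)^2)^3\big)$ if $\Delta_{ij}(\mathbf x)<R$ and $\bar a_{ij}(\mathbf x)=0$ otherwise; $\bar a_{ii}=0$. Smoothed percolation: $\bar\pi^r_{\mathcal F}(0)=\mathbf 0_f$ and, for $k=1,\dots,\delta$, $\bar\pi^r_{\mathcal F}(k)=\sigma^f_{s,q}\Big(\begin{bmatrix}\mathbf 0_{f\times l}&\mathbf I_f\end{bmatrix}\bar A(\mathbf x)\begin{bmatrix}\mathbf 1_l\\ \bar\pi^r_{\mathcal F}(k-1)\end{bmatrix}-r\mathbf 1_f\Big)\in\mathbb R^f$, whose entries are denoted $\bar\pi^r_{l+1}(k),\dots,\bar\pi^r_n(k)$. *)

From HB Require Import structures.
From mathcomp Require Import all_boot all_order all_algebra.
From mathcomp Require Import all_classical all_reals all_analysis.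
Set Implicit Arguments. Unset Strict Implicit. Unset Printing Implicit Defensive.
Import Order.TTheory GRing.Theory Num.Theory.
Local Open Scope ring_scope.

Section Defs.
Variable R : realType.

Definition dist2 (m n : nat) (x : 'I_n -> 'rV[R]_m) (i j : 'I_n) : R :=
  \sum_(k < m) (x i 0 k - x j 0 k) ^+ 2.
Definition dist (m n : nat) (x : 'I_n -> 'rV[R]_m) (i j : 'I_n) : R :=
  Num.sqrt (dist2 x i j).

Definition neighbors (m n : nat) (Rc : R) (x : 'I_n -> 'rV[R]_m) (i : 'I_n)
  : {set 'I_n} := [set j | (j != i) && (dist x i j < Rc)].

Definition r_reachable (m n : nat) (Rc : R) (x : 'I_n -> 'rV[R]_m)
  (S : {set 'I_n}) (r : nat) : Prop :=
  exists2 i, i \in S & (r <= #|neighbors Rc x i :\: S|)%N.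

Definition strongly_robust (m n : nat) (Rc : R) (x : 'I_n -> 'rV[R]_m)
  (r : nat) (L : {set 'I_n}) : Prop :=
  forall S2 : {set 'I_n}, S2 != finset.set0 -> S2 \subset ~: L -> r_reachable Rc x S2 r.

Definition sigmoid (s q y : R) : R :=
  (1 + q) / (1 + q^-1 * expR (- (s * y))) - q.

Definition abar (m n : nat) (Rc sA qA : R) (x : 'I_n -> 'rV[R]_m) (i j : 'I_n) : R :=
  if (i != j) && (dist x i j < Rc)
  then sigmoid sA qA ((Rc ^+ 2 - dist x i j ^+ 2) ^+ 3)
  else 0.

(* Leader set L = {1..l} = indices 0..l-1 of 'I_(l+f) *)
Definition leaders (l f : nat) : {set 'I_(l + f)} := [set i : 'I_(l + f) | (i < l)%N].

(* Smoothed percolation pibar^r_F(k) : 'I_f -> R (follower j is agent l+j) *)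
Fixpoint pibar (m l f : nat) (Rc sA qA s q : R) (r : nat)
  (x : 'I_(l + f) -> 'rV[R]_m) (k : nat) : 'I_f -> R :=
  match k with
  | 0%N => fun _ => 0
  | k'.+1 => fun i =>
      sigmoid s q
        (\sum_(j < l) abar Rc sA qA x (rshift l i) (lshift f j) * 1
         + \sum_(j < f) abar Rc sA qA x (rshift l i) (rshift l j)
                          * pibar Rc sA qA s q r x k' j
         - r%:R)
  end.

End Defs.

From HB Require Import structures.
From mathcomp Require Import all_boot all_order all_algebra.
From mathcomp Require Import all_classical all_reals all_analysis.
From mathcomp Require Import ring lra.
Import Order.TTheory GRing.Theory Num.Theory.
Local Open Scope ring_scope.

(* Suppose a nonempty set S of followers is not r-reachable. Every smoothed
   adjacency weight lies in [0, 1] and vanishes off the communication graph,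
   and every percolation value is at most 1. Hence, if the percolation values
   of S are nonpositive at step k, the input of a node of S at step k + 1 is at
   most the number of its neighbours outside S, which is less than r; the
   sigmoid of a negative number is negative, so the values of S stay
   nonpositive, and become negative from step 1 on. This contradicts
   pibar(delta) >= 0 since delta >= 1. *)

Section Sigmoid.
Variable R : realType.
Implicit Types s q y : R.

Lemma sigmoidE s q y : 0 < q ->
  sigmoid s q y = q * (1 - expR (- (s * y))) / (q + expR (- (s * y))).
Proof.
move=> q_gt0; rewrite /sigmoid; set E := expR _.
have E_gt0 : 0 < E := expR_gt0 _.
have qE_neq0 : q + E != 0 by rewrite gt_eqF // addr_gt0.
have den_neq0 : 1 + q^-1 * E != 0 by rewrite gt_eqF // addr_gt0 // mulr_gt0 // invr_gt0.
by field; rewrite ?qE_neq0 ?den_neq0 ?gt_eqF.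
Qed.

Lemma sigmoid_lt1 s q y : 0 < q -> sigmoid s q y < 1.
Proof.
move=> q_gt0; rewrite sigmoidE //; set E := expR _.
have E_gt0 : 0 < E := expR_gt0 _.
rewrite ltr_pdivrMr ?addr_gt0 //; nra.
Qed.

Lemma sigmoid_ge0 s q y : 0 < q -> 0 < s -> 0 <= y -> 0 <= sigmoid s q y.
Proof.
move=> q_gt0 s_gt0 y_ge0; rewrite sigmoidE //.
have E_le1 : expR (- (s * y)) <= 1 by rewrite expR_le1 oppr_le0 mulr_ge0 // ltW.
apply: divr_ge0; last by rewrite addr_ge0 ?expR_ge0 // ltW.
by rewrite mulr_ge0 ?subr_ge0 // ltW.
Qed.

Lemma sigmoid_lt0 s q y : 0 < q -> 0 < s -> y < 0 -> sigmoid s q y < 0.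
Proof.
move=> q_gt0 s_gt0 y_lt0; rewrite sigmoidE //.
have E_gt1 : 1 < expR (- (s * y)) by rewrite expR_gt1 oppr_gt0 pmulr_rlt0.
set E := expR _ in E_gt1 *.
rewrite ltr_pdivrMr ?addr_gt0 //; nra.
Qed.

End Sigmoid.

Lemma mul_le_indicator (R : realDomainType) (a v : R) (adj out : bool) :
  0 <= a <= 1 -> v <= 1 -> (~~ out -> v <= 0) -> (~~ adj -> a = 0) ->
  a * v <= (if adj && out then 1 else 0).
Proof.
move=> /andP[a_ge0 a_le1] v_le1 v_le0 a_eq0.
case: out v_le0 => [_ | /(_ isT) v_le0]; last by rewrite andbF mulr_ge0_le0.
case: adj a_eq0 => [_ | /(_ isT) ->] /=; last by rewrite mul0r.
nra.
Qed.

Lemma nonleader_rshift (l f : nat) (i : 'I_(l + f)) :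
  i \notin leaders l f -> exists j : 'I_f, i = rshift l j.
Proof.
rewrite inE -leqNgt => l_le_i.
have i_l_lt_f : (i - l < f)%N by rewrite ltn_subLR.
by exists (Ordinal i_l_lt_f); apply: val_inj; rewrite /= subnKC.
Qed.

Section Percolation.
Context {R : realType} {m l f : nat} {x : 'I_(l + f) -> 'rV[R]_m}.
Context {Rc sA qA s q : R} {r : nat}.
Hypotheses (sA_gt0 : 0 < sA) (qA_gt0 : 0 < qA) (s_gt0 : 0 < s) (q_gt0 : 0 < q).

Local Notation a := (abar Rc sA qA x).
Local Notation pi := (pibar Rc sA qA s q r x).

Lemma abar_ge0 i j : 0 <= a i j.
Proof.
rewrite /abar; case: ifP => [/andP[_ dist_lt] | _] //.
apply/sigmoid_ge0/exprn_ge0 => //; rewrite subr_ge0.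
have dist_ge0 : 0 <= dist x i j := sqrtr_ge0 _.
rewrite !expr2; nra.
Qed.

Lemma abar_le1 i j : a i j <= 1.
Proof. by rewrite /abar; case: ifP => _; [exact/ltW/sigmoid_lt1 | exact: ler01]. Qed.

Lemma abar_notin_neighbors i j : j \notin neighbors Rc x i -> a i j = 0.
Proof. by rewrite /abar inE eq_sym => /negbTE ->. Qed.

Lemma pibar_le1 k j : pi k j <= 1.
Proof. by case: k => [|k] /=; [exact: ler01 | exact/ltW/sigmoid_lt1]. Qed.

Context {S : {set 'I_(l + f)}}.
Hypothesis S_followers : S \subset ~: leaders l f.

Lemma percolation_input_le k i :
  (forall j, rshift l j \in S -> pi k j <= 0) ->
  \sum_(j < l) a (rshift l i) (lshift f j) * 1
    + \sum_(j < f) a (rshift l i) (rshift l j) * pi k j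
  <= #|neighbors Rc x (rshift l i) :\: S|%:R.
Proof.
move=> pi_le0; rewrite -sum1_card natr_sum [leRHS]big_mkcond big_split_ord /=.
have a_01 j : 0 <= a (rshift l i) j <= 1 by rewrite abar_ge0 abar_le1.
apply: lerD; apply: ler_sum => j _; rewrite inE andbC; apply: mul_le_indicator => //.
- move=> /negbNE /(fintype.subsetP S_followers).
  by rewrite !inE /= ltn_ord.
- exact: abar_notin_neighbors.
- exact: pibar_le1.
- by move/negbNE; apply: pi_le0.
- exact: abar_notin_neighbors.
Qed.

Hypothesis S_unreachable : forall i, i \in S -> (#|neighbors Rc x i :\: S| < r)%N.

Lemma pibar_succ_lt0 k :
  (forall j, rshift l j \in S -> pi k j <= 0) ->
  forall j, rshift l j \in S -> pi k.+1 j < 0.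
Proof.
move=> pi_le0 j jS /=; apply: sigmoid_lt0 => //; rewrite subr_lt0.
apply: le_lt_trans (percolation_input_le k j pi_le0) _.
by rewrite ltr_nat S_unreachable.
Qed.

Lemma pibar_le0 k j : rshift l j \in S -> pi k j <= 0.
Proof.
elim: k j => [|k IHk] j jS; first exact: lexx.
exact/ltW/pibar_succ_lt0.
Qed.

Lemma pibar_lt0 k j : (0 < k)%N -> rshift l j \in S -> pi k j < 0.
Proof. by case: k => // k _; apply/pibar_succ_lt0/pibar_le0. Qed.

End Percolation.

Theorem proposition1 (R : realType) (m l f : nat) (x : 'I_(l + f) -> 'rV[R]_m)
  (Rc : R) (r delta : nat) (s sA q qA : R) :
  (0 < f)%N -> 0 < Rc -> (0 < r)%N -> (0 < delta)%N -> (delta <= f)%N ->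
  0 < s -> 0 < sA -> 0 < q < 1 -> 0 < qA < 1 ->
  (forall i : 'I_f, 0 <= pibar Rc sA qA s q r x delta i) ->
  strongly_robust Rc x r (leaders l f).
Proof.
move=> _ _ _ delta_gt0 _ s_gt0 sA_gt0 /andP[q_gt0 _] /andP[qA_gt0 _] pi_ge0.
move=> S S_neq0 S_followers.
have [/exists_inP[i iS r_le] | /exists_inPn S_unreachable] :=
  boolP [exists i in S, (r <= #|neighbors Rc x i :\: S|)%N].
  by exists i.
have {}S_unreachable i : i \in S -> (#|neighbors Rc x i :\: S| < r)%N.
  by move=> iS; rewrite ltnNge S_unreachable.
have [i iS] := set0Pn _ S_neq0.
have [j def_i] : exists j : 'I_f, i = rshift l j.
  by apply: nonleader_rshift; have := fintype.subsetP S_followers i iS; rewrite inE.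
rewrite def_i in iS.
have := pibar_lt0 sA_gt0 qA_gt0 s_gt0 q_gt0 S_followers S_unreachable delta j
  delta_gt0 iS.
by rewrite ltNge pi_ge0.
Qed.
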